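(* For $n\in\{0,1,2,\dots\}$ and $x\in(-1,1)$ let $e_n(x)=\mathrm{e}\bigl(1+\sum_{k=1}^n(-1)^k f_k x^k\bigr)$. Then: (i) if $x\in(0,1)$, then for every $k\ge1$, $$e_1(x)<e_3(x)<\dots<e_{2k-1}(x)<e_{2k+1}(x)<\dots<e(x)<\dots<e_{2k+2}(x)<e_{2k}(x)<\dots<e_2(x)<e_0(x),$$ i.e. the odd-indexed $e_{2k-1}(x)$ strictly increase and are all $<e(x)$, the even-indexed $e_{2k}(x)$ strictly decrease and are all $>e(x)$; (ii) if $x\in(-1,0)$, then $e_0(x)<e_1(x)<e_2(x)<\dots<e_n(x)<e_{n+1}(x)<\dots<e(x)$, i.e. $e_n(x)$ is strictly increasing in $n$ and $e_n(x)<e(x)$ for all $n$; (iii) $e_n(0)=e(0)=\mathrm{e}$ for all $n\ge0$.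
   Context: Let $e(x)=(1+x)^{1/x}$ for $x>-1$, $x\neq 0$, and $e(0)=\mathrm{e}$. For $x\in(-1,1)$, $e(x)=\mathrm{e}\bigl(1+\sum_{k=1}^\infty e_k x^k\bigr)$, with $e_0=1$; equivalently $e_k=\mathrm{e}^{-1}\sum_{i=1}^\infty \frac{S_1(k+i,i)}{(k+i)!}$ for $k\ge1$, where $S_1(p,q)$ are the signed Stirling numbers of the first kind (sign $(-1)^{p-q}$). Define $f_k=(-1)^k e_k$, so that $e(x)=\mathrm{e}\bigl(1+\sum_{k\ge1}(-1)^kf_kx^k\bigr)$. *)

From Stdlib Require Import Reals.
Open Scope R_scope.

Definition eFun (x : R) : R :=
  if Req_EM_T x 0 then exp 1 else Rpower (1 + x) (1 / x).

(* Given the Taylor coefficients c = (e_k)_k of e(x)/e, f_k = (-1)^k e_k. *)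
Definition fk (c : nat -> R) (k : nat) : R := (-1) ^ k * c k.

Fixpoint psum (c : nat -> R) (n : nat) (x : R) : R :=
  match n with
  | O => 0
  | S m => psum c m x + (-1) ^ (S m) * fk c (S m) * x ^ (S m)
  end.

Definition en (c : nat -> R) (n : nat) (x : R) : R := exp 1 * (1 + psum c n x).

(** With [A(x) = ln(1+x)/x = sum_k (-1)^k x^k/(k+1)], the function [e(x)/e = exp (A(x) - 1)]
    satisfies [(e/e)' = A' (e/e)]. In terms of [f_k] this gives
    [(n+1) f_(n+1) = sum_(k<=n) (1 - 1/(k+2)) f_(n-k)], so every [f_k] is positive, and the
    differences [b_j = f_j - f_(j+1)] obey [(m+2) b_(m+1) = 1/(m+3) - sum_(k<=m) b_(m-k)/(k+2)],
    from which [b_j > 0] follows by induction. Hence for [0 < x < 1] the series of [e(x)/e] is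
    alternating with strictly decreasing terms [f_k x^k], and for [-1 < x < 0] all its terms
    [f_k |x|^k] are positive. *)

From Stdlib Require Import Reals Lra Lia Psatz.
From Coquelicot Require Import Coquelicot.
Open Scope R_scope.

Lemma sum_f_R0_pos (A : nat -> R) n :
  (forall i, (i <= n)%nat -> 0 < A i) -> 0 < sum_f_R0 A n.
Proof.
  induction n as [|n IH]; intros HA; simpl.
  - apply HA; lia.
  - assert (0 < sum_f_R0 A n) by (apply IH; intros; apply HA; lia).
    assert (0 < A (S n)) by (apply HA; lia).
    lra.
Qed.

Lemma neg1_pow_sqr k : (-1) ^ k * (-1) ^ k = 1.
Proof. rewrite <- Rpow_mult_distr. replace (-1 * -1) with 1 by ring. apply pow1. Qed.

(** * Positivity of a Kaluza-type recursion *)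

Definition inv_add2 (k : nat) : R := / (INR k + 2).

Lemma inv_add2_pos k : 0 < inv_add2 k.
Proof. unfold inv_add2. apply Rinv_0_lt_compat. pose proof (pos_INR k). lra. Qed.

Lemma inv_add2_spec k : inv_add2 k * (INR k + 2) = 1.
Proof. unfold inv_add2. field. pose proof (pos_INR k). lra. Qed.

Section DifferenceRecursion.

Variable b : nat -> R.
Hypothesis b_0 : b 0%nat = inv_add2 0.
Hypothesis b_rec : forall m, INR (S (S m)) * b (S m) =
  inv_add2 (S m) - sum_f_R0 (fun k => inv_add2 k * b (m - k)%nat) m.

(* The weight ratios [inv_add2 (S k) / inv_add2 k] increase with [k]. *)
Lemma shifted_weighted_sum_le m :
  (forall j, (j <= m)%nat -> 0 <= b j) ->
  sum_f_R0 (fun k => inv_add2 (S k) * b (m - k)%nat) m * inv_add2 (S m)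
  <= sum_f_R0 (fun k => inv_add2 k * b (m - k)%nat) m * inv_add2 (S (S m)).
Proof.
  intros Hb. rewrite !(Rmult_comm (sum_f_R0 _ _)), !scal_sum.
  apply sum_Rle. intros i Hi.
  assert (0 <= b (m - i)%nat) by (apply Hb; lia).
  assert (inv_add2 (S i) * inv_add2 (S m) <= inv_add2 i * inv_add2 (S (S m))).
  { unfold inv_add2. rewrite !S_INR. apply le_INR in Hi. pose proof (pos_INR i).
    rewrite <- !Rinv_mult. apply Rinv_le_contravar; nra. }
  nra.
Qed.

Lemma diff_succ_succ_pos m :
  (forall j, (j <= m)%nat -> 0 <= b j) -> 0 < b (S m) -> 0 < b (S (S m)).
Proof.
  intros Hb Hb1.
  pose proof (b_rec (S m)) as R1. pose proof (b_rec m) as R0.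
  rewrite decomp_sum in R1 by lia. simpl pred in R1.
  replace (S m - 0)%nat with (S m) in R1 by lia.
  change (sum_f_R0 (fun i => inv_add2 (S i) * b (S m - S i)%nat) m)
    with (sum_f_R0 (fun i => inv_add2 (S i) * b (m - i)%nat) m) in R1.
  pose proof (shifted_weighted_sum_le m Hb) as Hle.
  set (S1 := sum_f_R0 (fun i => inv_add2 (S i) * b (m - i)%nat) m) in *.
  set (S0 := sum_f_R0 (fun k => inv_add2 k * b (m - k)%nat) m) in *.
  pose proof (inv_add2_spec (S m)) as E1. pose proof (inv_add2_spec (S (S m))) as E2.
  pose proof (inv_add2_pos (S m)). pose proof (inv_add2_pos (S (S m))).
  assert (inv_add2 0 = / 2) by (unfold inv_add2; simpl; f_equal; ring).
  rewrite !S_INR in *. pose proof (pos_INR m).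
  set (v1 := inv_add2 (S m)) in *. set (v2 := inv_add2 (S (S m))) in *.
  (* eliminating [S0] and [S1] leaves [(m+3) b_(m+2) v1 >= b_(m+1) ((m+2) v2 - v1/2)] *)
  assert (0 < v2 * (INR m + 1 + 1) - v1 * inv_add2 0) by nra.
  assert (0 < v1 * ((INR m + 1 + 1 + 1) * b (S (S m)))) by nra.
  nra.
Qed.

Lemma diff_pos n : 0 < b n.
Proof.
  assert (H : forall m j, (j <= S m)%nat -> 0 < b j).
  { intros m; induction m as [|m IH]; intros j Hj.
    - destruct j as [|[|j]].
      + rewrite b_0. apply inv_add2_pos.
      + pose proof (b_rec 0) as R. simpl in R. rewrite b_0 in R. unfold inv_add2 in R.
        replace (/ (INR 1 + 2) - / (INR 0 + 2) * / (INR 0 + 2)) with (/ 12) in R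
          by (simpl; field).
        pose proof (Rinv_0_lt_compat 12 ltac:(lra)). lra.
      + lia.
    - destruct (Nat.le_gt_cases j (S m)) as [h|h]; [now apply IH|].
      replace j with (S (S m)) by lia.
      apply diff_succ_succ_pos; [intros i Hi; left; apply IH; lia | apply IH; lia]. }
  apply (H n); lia.
Qed.

End DifferenceRecursion.

Section CoefficientRecursion.

Variable f : nat -> R.
Hypothesis f_0 : f 0%nat = 1.
Hypothesis f_rec : forall n, INR (S n) * f (S n) =
  sum_f_R0 (fun k => (1 - inv_add2 k) * f (n - k)%nat) n.

Lemma coef_pos n : 0 < f n.
Proof.
  assert (H : forall m j, (j <= m)%nat -> 0 < f j).
  { intros m; induction m as [|m IH]; intros j Hj.
    - replace j with 0%nat by lia. lra.
    - destruct (Nat.le_gt_cases j m) as [h|h]; [now apply IH|].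
      replace j with (S m) by lia.
      assert (0 < INR (S m) * f (S m)).
      { rewrite f_rec. apply sum_f_R0_pos. intros i Hi.
        pose proof (inv_add2_spec i). pose proof (inv_add2_pos i). pose proof (pos_INR i).
        apply Rmult_lt_0_compat; [nra | apply IH; lia]. }
      pose proof (lt_0_INR (S m) ltac:(lia)). nra. }
  apply (H n); lia.
Qed.

Lemma coef_diff_rec m :
  INR (S (S m)) * (f (S m) - f (S (S m))) =
  inv_add2 (S m) - sum_f_R0 (fun k => inv_add2 k * (f (m - k)%nat - f (S (m - k)))) m.
Proof.
  set (T n := sum_f_R0 (fun k => f (n - k)%nat) n).
  set (U n := sum_f_R0 (fun k => inv_add2 k * f (n - k)%nat) n).
  assert (Rec : forall n, INR (S n) * f (S n) = T n - U n).
  { intros n. rewrite f_rec. unfold T, U. rewrite <- minus_sum.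
    apply sum_eq; intros; ring. }
  assert (T_S : T (S m) = f (S m) + T m).
  { unfold T. rewrite decomp_sum by lia. reflexivity. }
  assert (U_S : U (S m) = sum_f_R0 (fun k => inv_add2 k * f (S (m - k))) m + inv_add2 (S m)).
  { unfold U. rewrite tech5, Nat.sub_diag, f_0, Rmult_1_r. f_equal.
    apply sum_eq. intros i Hi. do 2 f_equal. lia. }
  assert (Split : sum_f_R0 (fun k => inv_add2 k * (f (m - k)%nat - f (S (m - k)))) m =
                  U m - sum_f_R0 (fun k => inv_add2 k * f (S (m - k))) m).
  { unfold U. rewrite <- minus_sum. apply sum_eq. intros; ring. }
  pose proof (Rec (S m)) as E1. pose proof (Rec m) as E0.
  rewrite Split. rewrite T_S, U_S in E1. rewrite !S_INR in *. lra.
Qed.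

Lemma coef_decr n : f (S n) < f n.
Proof.
  enough (0 < f n - f (S n)) by lra.
  apply (diff_pos (fun j => f j - f (S j))).
  - pose proof (f_rec 0) as R. simpl in R. rewrite f_0 in R. lra.
  - exact coef_diff_rec.
Qed.

End CoefficientRecursion.

(** * The power series of [e(x)/e] *)

Lemma CV_radius_gt_of_ex (a : nat -> R) :
  (forall x, Rabs x < 1 -> ex_pseries a x) ->
  forall x, Rabs x < 1 -> Rbar_lt (Rabs x) (CV_radius a).
Proof.
  intros Hex x Hx.
  set (r := (Rabs x + 1) / 2).
  assert (Hr : Rabs r < 1 /\ Rabs x < Rabs r).
  { pose proof (Rabs_pos x). unfold r. rewrite Rabs_pos_eq; lra. }
  destruct (Hex r (proj1 Hr)) as [l Hl].
  apply is_pseries_R in Hl.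
  assert (Hr0 := ex_series_lim_0 _ (ex_intro _ l Hl)).
  assert (Hle : Rbar_le (Rabs r) (CV_radius a)).
  { apply Rbar_not_lt_le. intro C. exact (CV_disk_outside a r C Hr0). }
  eapply Rbar_lt_le_trans; [|exact Hle]. simpl. lra.
Qed.

Lemma locally_unit_disk (P : R -> Prop) x :
  (forall y, Rabs y < 1 -> P y) -> Rabs x < 1 -> locally x P.
Proof.
  intros HP Hx. assert (He : 0 < 1 - Rabs x) by lra.
  exists (mkposreal _ He). intros y Hy. apply HP.
  change (Rabs (y - x) < 1 - Rabs x) in Hy.
  pose proof (Rabs_triang_inv y x). lra.
Qed.

Lemma CV_radius_pos_of_unit_disk (a : nat -> R) :
  (forall x, Rabs x < 1 -> Rbar_lt (Rabs x) (CV_radius a)) -> Rbar_lt 0 (CV_radius a).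
Proof.
  intros Ha. replace (Finite 0) with (Finite (Rabs 0)) by (f_equal; apply Rabs_R0).
  apply Ha. rewrite Rabs_R0. lra.
Qed.

(* Both sides of [c' = a' c] are power series agreeing near [0], hence coefficientwise. *)
Lemma PSeries_exp_derive_coef (a c : nat -> R) (d : R) :
  (forall x, Rabs x < 1 -> Rbar_lt (Rabs x) (CV_radius a)) ->
  (forall x, Rabs x < 1 -> Rbar_lt (Rabs x) (CV_radius c)) ->
  (forall x, Rabs x < 1 -> PSeries c x = exp (PSeries a x + d)) ->
  forall n, PS_derive c n = PS_mult (PS_derive a) c n.
Proof.
  intros Ha Hc Hexp.
  assert (Ha' : forall x, Rabs x < 1 -> Rbar_lt (Rabs x) (CV_radius (PS_derive a))).
  { intros x Hx. rewrite CV_radius_derive. now apply Ha. }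
  assert (Dq : forall x, Rabs x < 1 ->
     PSeries (PS_derive c) x = PSeries (PS_mult (PS_derive a) c) x).
  { intros x Hx. rewrite PSeries_mult by auto.
    assert (H1 := is_derive_PSeries c x (Hc x Hx)).
    assert (H2 : is_derive (fun y => exp (PSeries a y + d)) x
                  (scal (plus (PSeries (PS_derive a) x) zero) (exp (PSeries a x + d)))).
    { apply (is_derive_comp exp (fun y => PSeries a y + d)); [apply is_derive_exp|].
      apply (is_derive_plus (PSeries a) (fun _ => d) x).
      - apply is_derive_PSeries. now apply Ha.
      - exact (is_derive_const (K := R_AbsRing) (V := R_NormedModule) d x). }
    apply is_derive_ext_loc with (g := PSeries c) in H2.
    - apply is_derive_unique in H1. apply is_derive_unique in H2.
      rewrite <- H1, H2, <- Hexp by exact Hx.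
      unfold scal, plus, mult; simpl. unfold mult; simpl.
      change (zero : R) with 0. ring.
    - apply locally_unit_disk; [|exact Hx]. intros y Hy. symmetry. now apply Hexp. }
  intros n. apply PSeries_ext_recip.
  - rewrite CV_radius_derive. now apply CV_radius_pos_of_unit_disk.
  - apply CV_radius_pos_of_unit_disk, CV_radius_gt_of_ex.
    intros x Hx. apply ex_pseries_mult; auto.
  - apply locally_unit_disk; [exact Dq | rewrite Rabs_R0; lra].
Qed.

Definition ln1p_coef (k : nat) : R := (-1) ^ k / INR (S k).

Lemma CV_radius_ln1p_coef x : Rabs x < 1 -> Rbar_lt (Rabs x) (CV_radius ln1p_coef).
Proof.
  intros Hx.
  destruct (CV_radius_bounded ln1p_coef) as [Hub _].
  assert (H1 : Rbar_le 1 (CV_radius ln1p_coef)).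
  { apply Hub. exists 1. intros n. rewrite pow1, Rmult_1_r. unfold ln1p_coef.
    rewrite Rabs_div, pow_1_abs, Rabs_pos_eq by (apply pos_INR || apply not_0_INR; lia).
    rewrite S_INR. pose proof (pos_INR n). apply Rle_div_l; lra. }
  eapply Rbar_lt_le_trans; [|exact H1]. simpl. lra.
Qed.

Lemma PSeries_neg1_pow y : Rabs y < 1 -> PSeries (fun n => (-1) ^ n) y = / (1 + y).
Proof.
  intros Hy. apply is_pseries_unique, is_pseries_R.
  replace (/ (1 + y)) with (/ (1 - - y)) by (f_equal; ring).
  eapply is_series_ext; [|apply is_series_geom; rewrite Rabs_Ropp; exact Hy].
  intros n; simpl. rewrite <- Rpow_mult_distr. f_equal; ring.
Qed.

Lemma ln1p_PSeries x : Rabs x < 1 -> ln (1 + x) = x * PSeries ln1p_coef x.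
Proof.
  intros Hx.
  set (a := PS_incr_1 ln1p_coef).
  replace (x * PSeries ln1p_coef x) with (PSeries a x) by (unfold a; now rewrite PSeries_incr_1).
  set (D := fun y => PSeries a y - ln (1 + y)).
  assert (HD : forall y, Rabs (y - 0) <= Rabs x -> is_derive D y 0).
  { intros y Hy. rewrite Rminus_0_r in Hy.
    assert (Hy1 : Rabs y < 1) by lra.
    assert (Hrad : Rbar_lt (Rabs y) (CV_radius a)).
    { unfold a. rewrite CV_radius_incr_1. now apply CV_radius_ln1p_coef. }
    assert (Hp : 0 < 1 + y) by (apply Rabs_def2 in Hy1; lra).
    replace 0 with (PSeries (PS_derive a) y - / (1 + y)).
    - apply (is_derive_minus (PSeries a) (fun y => ln (1 + y)) y).
      + now apply is_derive_PSeries.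
      + replace (/ (1 + y)) with (scal 1 (/ (1 + y)))
          by (unfold scal; simpl; unfold mult; simpl; ring).
        apply (is_derive_comp ln (fun y => 1 + y)).
        * now apply is_derive_ln.
        * auto_derive; try easy; ring.
    - rewrite <- PSeries_neg1_pow by exact Hy1.
      rewrite (PSeries_ext (PS_derive a) (fun n => (-1) ^ n)); [ring|].
      intros n. unfold PS_derive, a, PS_incr_1, ln1p_coef. field. apply not_0_INR; lia. }
  destruct (MVT_cor4 D (fun _ => 0) 0 (Rabs x) HD x ltac:(rewrite Rminus_0_r; lra))
    as [y [Hy _]].
  unfold D in Hy. rewrite PSeries_0, Rplus_0_r, ln_1 in Hy.
  change (a 0%nat) with 0 in Hy. lra.
Qed.

Lemma eFun_div_e x : Rabs x < 1 -> eFun x / exp 1 = exp (PSeries ln1p_coef x + -1).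
Proof.
  intros Hx. pose proof (exp_pos 1). unfold eFun.
  destruct (Req_EM_T x 0) as [->|Hx0].
  - rewrite PSeries_0. unfold ln1p_coef. simpl.
    replace (1 / 1 + -1) with 0 by field. rewrite exp_0. field. lra.
  - unfold Rpower. rewrite ln1p_PSeries by exact Hx.
    replace (1 / x * (x * PSeries ln1p_coef x)) with ((PSeries ln1p_coef x + -1) + 1)
      by (field; exact Hx0).
    rewrite exp_plus. field. lra.
Qed.

Section TaylorCoefficients.

Variable c : nat -> R.
Hypothesis c_0 : c 0%nat = 1.
Hypothesis c_series : forall x, -1 < x < 1 -> Pser c x (eFun x / exp 1).

Lemma is_pseries_eFun x : Rabs x < 1 -> is_pseries c x (eFun x / exp 1).
Proof. intros Hx. apply is_pseries_Reals, c_series. apply Rabs_def2 in Hx. lra. Qed.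

Lemma taylor_derive_coef n : PS_derive c n = PS_mult (PS_derive ln1p_coef) c n.
Proof.
  apply (PSeries_exp_derive_coef _ _ (-1)).
  - exact CV_radius_ln1p_coef.
  - apply CV_radius_gt_of_ex. intros x Hx. eexists. now apply is_pseries_eFun.
  - intros x Hx. rewrite (is_pseries_unique _ _ _ (is_pseries_eFun x Hx)).
    now apply eFun_div_e.
Qed.

Lemma fk_rec n : INR (S n) * fk c (S n) =
  sum_f_R0 (fun k => (1 - inv_add2 k) * fk c (n - k)%nat) n.
Proof.
  pose proof (taylor_derive_coef n) as H. unfold PS_derive, PS_mult in H.
  assert (Hsum : sum_f_R0 (fun k => INR (S k) * ln1p_coef (S k) * c (n - k)%nat) n =
      (-1) ^ S n * sum_f_R0 (fun k => (1 - inv_add2 k) * fk c (n - k)%nat) n).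
  { rewrite scal_sum. apply sum_eq. intros i Hi. unfold fk, ln1p_coef, inv_add2.
    assert (Ep : (-1) ^ S n = (-1) ^ S i * (-1) ^ (n - i)) by (rewrite <- pow_add; f_equal; lia).
    rewrite Ep. pose proof (neg1_pow_sqr (n - i)) as Hsq.
    set (p := (-1) ^ (n - i)) in *. set (q := (-1) ^ S i) in *.
    rewrite !S_INR. pose proof (pos_INR i).
    transitivity ((1 - / (INR i + 1 + 1)) * (p * p) * c (n - i)%nat * q).
    - rewrite Hsq. field. lra.
    - replace (INR i + 1 + 1) with (INR i + 2) by ring. ring. }
  rewrite Hsum in H. change (fk c (S n)) with ((-1) ^ S n * c (S n)).
  replace (INR (S n) * ((-1) ^ S n * c (S n))) with ((-1) ^ S n * (INR (S n) * c (S n))) by ring.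
  rewrite H, <- Rmult_assoc, neg1_pow_sqr. ring.
Qed.

Lemma fk_0 : fk c 0 = 1.
Proof. unfold fk. simpl. rewrite c_0. ring. Qed.

Lemma fk_pos k : 0 < fk c k.
Proof. exact (coef_pos _ fk_0 fk_rec k). Qed.

Lemma fk_decr k : fk c (S k) < fk c k.
Proof. exact (coef_decr _ fk_0 fk_rec k). Qed.

Lemma en_partial_sum n x : en c n x = exp 1 * sum_f_R0 (fun k => c k * x ^ k) n.
Proof.
  unfold en. f_equal. induction n as [|n IH].
  - simpl. rewrite c_0. ring.
  - change (psum c (S n) x) with (psum c n x + (-1) ^ S n * fk c (S n) * x ^ S n).
    rewrite tech5, <- IH. unfold fk.
    replace ((-1) ^ S n * ((-1) ^ S n * c (S n)) * x ^ S n)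
      with (((-1) ^ S n * (-1) ^ S n) * c (S n) * x ^ S n) by ring.
    rewrite neg1_pow_sqr. ring.
Qed.

Lemma c_eq_fk k : c k = (-1) ^ k * fk c k.
Proof. unfold fk. rewrite <- Rmult_assoc, neg1_pow_sqr. ring. Qed.

End TaylorCoefficients.

(** * Partial sums of alternating and of positive series *)

Section AlternatingSeries.

Variables (t : nat -> R) (L : R).
Hypothesis t_decr : forall k, t (S k) < t k.
Hypothesis t_cv : Un_cv (fun n => sum_f_R0 (fun k => (-1) ^ k * t k) n) L.

Let s n := sum_f_R0 (fun k => (-1) ^ k * t k) n.

Lemma alt_sum_succ_succ n : s (S (S n)) = s n + (-1) ^ S n * (t (S n) - t (S (S n))).
Proof. unfold s. rewrite !tech5. simpl. ring. Qed.

Lemma alt_sum_odd_incr k : s (2 * k + 1) < s (2 * k + 3).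
Proof.
  replace (2 * k + 3)%nat with (S (S (2 * k + 1))) by lia.
  rewrite alt_sum_succ_succ. replace (S (2 * k + 1)) with (2 * S k)%nat by lia.
  rewrite pow_1_even. pose proof (t_decr (2 * S k)). lra.
Qed.

Lemma alt_sum_even_decr k : s (2 * k + 2) < s (2 * k).
Proof.
  replace (2 * k + 2)%nat with (S (S (2 * k))) by lia.
  rewrite alt_sum_succ_succ, pow_1_odd. pose proof (t_decr (S (2 * k))). lra.
Qed.

Lemma alt_sum_odd_lt k : s (2 * k + 1) < L.
Proof.
  assert (G : Un_growing (fun k => s (2 * k + 1)%nat)).
  { intros n. replace (2 * S n + 1)%nat with (2 * n + 3)%nat by lia.
    left. apply alt_sum_odd_incr. }
  assert (C : Un_cv (fun k => s (2 * k + 1)%nat) L).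
  { intros eps He. destruct (t_cv eps He) as [N HN]. exists N. intros n Hn. apply HN. lia. }
  pose proof (growing_ineq _ _ G C (S k)) as H. cbv beta in H.
  replace (2 * S k + 1)%nat with (2 * k + 3)%nat in H by lia.
  pose proof (alt_sum_odd_incr k). lra.
Qed.

Lemma alt_sum_even_gt k : L < s (2 * k).
Proof.
  assert (G : Un_decreasing (fun k => s (2 * k)%nat)).
  { intros n. replace (2 * S n)%nat with (2 * n + 2)%nat by lia.
    left. apply alt_sum_even_decr. }
  assert (C : Un_cv (fun k => s (2 * k)%nat) L).
  { intros eps He. destruct (t_cv eps He) as [N HN]. exists N. intros n Hn. apply HN. lia. }
  pose proof (decreasing_ineq _ _ G C (S k)) as H. cbv beta in H.
  replace (2 * S k)%nat with (2 * k + 2)%nat in H by lia.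
  pose proof (alt_sum_even_decr k). lra.
Qed.

End AlternatingSeries.

Lemma pos_series_partial_sums (s : nat -> R) L n :
  (forall k, 0 < s k) -> Un_cv (fun n => sum_f_R0 s n) L ->
  sum_f_R0 s n < sum_f_R0 s (S n) /\ sum_f_R0 s n < L.
Proof.
  intros Hs Hcv. pose proof (Hs (S n)) as Hpos.
  pose proof (sum_incr s (S n) L Hcv ltac:(intros; now left)) as Hle.
  rewrite tech5 in *. lra.
Qed.

Section Bounds.

Variable c : nat -> R.
Hypothesis c_0 : c 0%nat = 1.
Hypothesis c_series : forall x, -1 < x < 1 -> Pser c x (eFun x / exp 1).

Let alt_term x k := fk c k * x ^ k.

Lemma en_alt_sum n x :
  en c n x = exp 1 * sum_f_R0 (fun k => (-1) ^ k * alt_term x k) n.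
Proof.
  rewrite en_partial_sum by exact c_0. f_equal. apply sum_eq. intros k _.
  unfold alt_term. rewrite (c_eq_fk c k). ring.
Qed.

Lemma alt_term_decr x k : 0 < x < 1 -> alt_term x (S k) < alt_term x k.
Proof.
  intros Hx. unfold alt_term. simpl.
  pose proof (fk_pos c c_0 c_series (S k)). pose proof (fk_decr c c_0 c_series k).
  pose proof (pow_lt x k ltac:(lra)).
  assert (fk c (S k) * x < fk c k) by nra.
  replace (fk c (S k) * (x * x ^ k)) with ((fk c (S k) * x) * x ^ k) by ring.
  now apply Rmult_lt_compat_r.
Qed.

Lemma alt_sum_cv x : -1 < x < 1 ->
  Un_cv (fun n => sum_f_R0 (fun k => (-1) ^ k * alt_term x k) n) (eFun x / exp 1).
Proof.
  intros Hx eps Heps. destruct (c_series x Hx eps Heps) as [N HN]. exists N. intros n Hn.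
  erewrite <- sum_eq; [now apply HN|]. intros k _. unfold alt_term. rewrite (c_eq_fk c k). ring.
Qed.

Lemma eFun_e_mul x : eFun x = exp 1 * (eFun x / exp 1).
Proof. field. apply Rgt_not_eq, exp_pos. Qed.

Lemma en_bounds_pos x : 0 < x < 1 ->
  (forall k, en c (2 * k + 1) x < en c (2 * k + 3) x /\ en c (2 * k + 2) x < en c (2 * k) x) /\
  (forall k, en c (2 * k + 1) x < eFun x /\ eFun x < en c (2 * k) x).
Proof.
  intros Hx. pose proof (exp_pos 1).
  assert (Hd := fun k => alt_term_decr x k Hx).
  assert (Hcv := alt_sum_cv x ltac:(lra)).
  split; intros k; rewrite !en_alt_sum; [|rewrite (eFun_e_mul x)]; split;
    apply Rmult_lt_compat_l; auto.
  - apply (alt_sum_odd_incr _ Hd).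
  - apply (alt_sum_even_decr _ Hd).
  - apply (alt_sum_odd_lt _ _ Hd Hcv).
  - apply (alt_sum_even_gt _ _ Hd Hcv).
Qed.

Lemma en_bounds_neg x n : -1 < x < 0 -> en c n x < en c (S n) x /\ en c n x < eFun x.
Proof.
  intros Hx. pose proof (exp_pos 1).
  assert (Hs : forall k, 0 < c k * x ^ k).
  { intros k. rewrite (c_eq_fk c k).
    replace ((-1) ^ k * fk c k * x ^ k) with (fk c k * (-1 * x) ^ k)
      by (rewrite Rpow_mult_distr; ring).
    apply Rmult_lt_0_compat; [apply (fk_pos c c_0 c_series) | apply pow_lt; lra]. }
  destruct (pos_series_partial_sums _ _ n Hs (c_series x ltac:(lra))).
  rewrite !en_partial_sum by exact c_0. rewrite (eFun_e_mul x).
  split; apply Rmult_lt_compat_l; auto.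
Qed.

Lemma en_at_0 n : en c n 0 = exp 1.
Proof.
  rewrite en_partial_sum by exact c_0.
  rewrite <- (Rmult_1_r (exp 1)) at 2. f_equal.
  induction n as [|n IH]; [simpl; rewrite c_0; ring|].
  rewrite tech5, IH. simpl. ring.
Qed.

End Bounds.

Lemma eFun_0 : eFun 0 = exp 1.
Proof. unfold eFun. destruct (Req_EM_T 0 0); [reflexivity | congruence]. Qed.

Theorem mainTheorem3 :
  forall c : nat -> R,
    c 0%nat = 1 ->
    (forall x, -1 < x < 1 -> Pser c x (eFun x / exp 1)) ->
    (forall x, 0 < x < 1 ->
        (forall k : nat,
            en c (2 * k + 1) x < en c (2 * k + 3) x /\
            en c (2 * k + 2) x < en c (2 * k) x) /\
        (forall k : nat,
            en c (2 * k + 1) x < eFun x /\ eFun x < en c (2 * k) x)) /\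
    (forall x, -1 < x < 0 ->
        forall n : nat, en c n x < en c (S n) x /\ en c n x < eFun x) /\
    (forall n : nat, en c n 0 = eFun 0 /\ eFun 0 = exp 1).
Proof.
  intros c c_0 c_series. split; [|split].
  - intros x Hx. exact (en_bounds_pos c c_0 c_series x Hx).
  - intros x Hx n. exact (en_bounds_neg c c_0 c_series x n Hx).
  - intros n. rewrite eFun_0. split; [exact (en_at_0 c c_0 n) | reflexivity].
Qed.
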